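(* Let $\mathcal C$ be a Clifford circuit with linear outcome code $\mathcal O(\mathcal C)$ and let $u\in\mathcal O(\mathcal C)^\perp$ be nonzero. Let $\ell_u$ (resp. $\ell_u'$) be the minimum (resp. maximum) of $\ell_j$ over $j$ with $u_j=1$. If $\ell<\ell_u$ or $\ell\ge\ell_u'$ (with $0\le\ell\le\Delta$), then $\overleftarrow{F(u)}_{\ell+0.5}=I$.
   Context: A Clifford circuit on $n$ qubits is a finite sequence of operations, each a unitary Clifford gate or the measurement of a Hermitian $n$-qubit Pauli, each with a level in $\{1,2,\dots\}$; operations of equal level have disjoint supports and levels are nondecreasing; depth $\Delta$ = maximal level. In circuit order the $j$-th measurement measures $S_j$ at level $\ell_j$ ($j=1,\dots,m$); outcome $o_j=0$ for eigenvalue $+1$, $1$ for $-1$. The outcome code $\mathcal O(\mathcal C)$ is the set of outcome bit-strings occurring with nonzero probability for some input state; $\perp$ refers to $(u|v)=\sum u_iv_i\bmod2$. $\overline{\mathcal P}_N$ is the $N$-qubit Pauli group modulo phases. $U_\ell$ is the product of unitary gates of level $\ell$ (identity if none). Fault operators $F\in\overline{\mathcal P}_{n(\Delta+1)}$ act on qubits $(\ell+0.5,q)$, $0\le\ell\le\Delta$, $1\le q\le n$, with level components $F_{\ell+0.5}$; $\eta_{\ell+0.5}(P)$ is $P$ at level $\ell+0.5$ and $I$ elsewhere. Back-cumulant $\overleftarrow F$: start with $F$; for $\ell=\Delta,\dots,1$ replace $\overleftarrow F_{\ell-0.5}$ by $\overleftarrow F_{\ell-0.5}\cdot U_\ell^{-1}\overleftarrow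 F_{\ell+0.5}U_\ell$. $F(u)=\prod_j\eta_{\ell_j-0.5}(S_j^{u_j})$. *)

From HB Require Import structures.
From mathcomp Require Import all_boot all_order all_algebra.
From mathcomp Require Import algC.
Set Implicit Arguments. Unset Strict Implicit. Unset Printing Implicit Defensive.
Import Order.TTheory GRing.Theory Num.Theory.
Local Open Scope ring_scope.

Section Clifford.
Variable n : nat.

(* n-qubit operators: matrices on the computational basis |x>, x < 2^n;
   qubit q of basis index x is bit q of x. *)
Definition Op := 'M[algC]_(2 ^ n).

Definition bit (q x : nat) : bool := odd (x %/ 2 ^ q)%N.
Definition flip (q x : nat) : nat := if bit q x then (x - 2 ^ q)%N else (x + 2 ^ q)%N.

Definition pX (q : 'I_n) : Op := \matrix_(x, y) ((val x == flip q y)%:R).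
Definition pZ (q : 'I_n) : Op :=
  \matrix_(x, y) ((x == y)%:R * (-1) ^+ bit q x).

Definition paulimat (a b : {ffun 'I_n -> bool}) : Op :=
  foldr (fun q acc => (if a q then pX q else 1%:M) *m (if b q then pZ q else 1%:M) *m acc)
        1%:M (enum 'I_n).

Definition pauli_group (P : Op) : Prop :=
  exists (k : 'I_4) (a b : {ffun 'I_n -> bool}), P = ('i ^+ k) *: paulimat a b.

Definition adj (A : Op) : Op := (map_mx Num.conj A)^T.

Definition hermitian_pauli (S : Op) : Prop := pauli_group S /\ adj S = S.

Definition unitary (U : Op) : Prop := adj U *m U = 1%:M.

Definition clifford (U : Op) : Prop :=
  unitary U /\ forall P, pauli_group P -> pauli_group (U *m P *m adj U).

(* A acts trivially on qubit q, i.e. A = I_q (x) B (entrywise form) *)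
Definition agree_off (q : 'I_n) (x x' : 'I_(2 ^ n)) : Prop :=
  forall r : 'I_n, r != q -> bit r x = bit r x'.
Definition trivial_on (q : 'I_n) (A : Op) : Prop :=
  forall x y : 'I_(2 ^ n),
    (bit q x != bit q y -> A x y = 0) /\
    (forall x' y' : 'I_(2 ^ n), agree_off q x x' -> agree_off q y y' ->
        bit q x = bit q y -> bit q x' = bit q y' -> A x y = A x' y').
(* qubit q is in the support of A iff ~ trivial_on q A *)

Inductive op := Gate of Op | Meas of Op.
Definition op_mat (o : op) : Op := match o with Gate U => U | Meas Sm => Sm end.

(* A Clifford circuit: a sequence of (level, operation) pairs in circuit order *)
Definition circuit := seq (nat * op).

Definition dflt : nat * op := (0%N, Gate 1%:M).

Definition wf_circuit (c : circuit) : Prop :=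
  [/\ forall i, (i < size c)%N -> (1 <= (nth dflt c i).1)%N,
      sorted leq (map fst c),
      forall i j, (i < j < size c)%N -> (nth dflt c i).1 = (nth dflt c j).1 ->
        forall q, trivial_on q (op_mat (nth dflt c i).2) \/
                  trivial_on q (op_mat (nth dflt c j).2)
    & forall i, (i < size c)%N ->
        match (nth dflt c i).2 with
        | Gate U => clifford U
        | Meas Sm => hermitian_pauli Sm
        end].

Definition depth (c : circuit) : nat := \max_(p <- c) p.1.

(* measurements in circuit order: (level l_j, Pauli S_j) *)
Definition meas_list (c : circuit) : seq (nat * Op) :=
  pmap (fun p => if p.2 is Meas Sm then Some (p.1, Sm) else None) c.
Definition nmeas (c : circuit) : nat := size (meas_list c).
Definition mlev (c : circuit) (j : nat) : nat := (nth (0%N, 1%:M) (meas_list c) j).1.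
Definition mop (c : circuit) (j : nat) : Op := (nth (0%N, 1%:M) (meas_list c) j).2.

Definition proj (o : bool) (S : Op) : Op := 2^-1 *: (1%:M + ((-1) ^+ o) *: S).

(* Kraus operator of the circuit for outcome assignment f (k = index of the
   next measurement); later operations act on the left *)
Fixpoint kraus (c : circuit) (f : nat -> bool) (k : nat) : Op :=
  match c with
  | [::] => 1%:M
  | (_, Gate U) :: c' => kraus c' f k *m U
  | (_, Meas Sm) :: c' => kraus c' f k.+1 *m proj (f k) Sm
  end.

Definition bits_of (m : nat) (o : {ffun 'I_m -> bool}) (j : nat) : bool :=
  if insub j is Some i then o i else false.

(* outcome code: outcome strings with nonzero probability for some input state *)
Definition outcome_code (c : circuit) (o : {ffun 'I_(nmeas c) -> bool}) : Prop :=
  exists psi : 'cV[algC]_(2 ^ n), kraus c (bits_of o) 0 *m psi != 0.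

Definition bxor (m : nat) (o1 o2 : {ffun 'I_m -> bool}) : {ffun 'I_m -> bool} :=
  [ffun j => o1 j (+) o2 j].

Definition linear_code (m : nat) (C : {ffun 'I_m -> bool} -> Prop) : Prop :=
  C [ffun => false] /\ forall o1 o2, C o1 -> C o2 -> C (bxor o1 o2).

Definition bdot (m : nat) (u v : {ffun 'I_m -> bool}) : bool :=
  odd (\sum_(j < m) (u j && v j)).

Definition in_perp (m : nat) (C : {ffun 'I_m -> bool} -> Prop) (u : {ffun 'I_m -> bool}) :=
  forall o, C o -> bdot u o = false.

Definition Ulev (c : circuit) (l : nat) : Op :=
  foldl (fun acc p => if p.2 is Gate U then (if p.1 == l then U *m acc else acc) else acc)
        1%:M c.

(* component at level k+0.5 of F(u): product of S_j with u_j = 1 and l_j - 0.5 = k + 0.5 *)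
Definition Fcomp (c : circuit) (u : {ffun 'I_(nmeas c) -> bool}) (k : nat) : Op :=
  foldr (fun j acc => (if u j && (mlev c j == k.+1) then mop c j else 1%:M) *m acc)
        1%:M (enum 'I_(nmeas c)).

(* back-cumulant: bc_aux d is the component at level (depth - d) + 0.5 *)
Fixpoint bc_aux (c : circuit) (u : {ffun 'I_(nmeas c) -> bool}) (d : nat) : Op :=
  match d with
  | 0 => Fcomp u (depth c)
  | d'.+1 => Fcomp u (depth c - d) *m
             (invmx (Ulev c (depth c - d')) *m bc_aux u d' *m Ulev c (depth c - d'))
  end.

Definition back_cumulant (c : circuit) (u : {ffun 'I_(nmeas c) -> bool}) (l : nat) : Op :=
  bc_aux u (depth c - l).

Definition lev_min (c : circuit) (u : {ffun 'I_(nmeas c) -> bool}) : nat :=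
  \big[minn/(depth c).+1]_(j < nmeas c | u j) mlev c j.
Definition lev_max (c : circuit) (u : {ffun 'I_(nmeas c) -> bool}) : nat :=
  \max_(j < nmeas c | u j) mlev c j.

Definition is_identity_mod_phase (P : Op) : Prop := exists z : algC, P = z%:M.

End Clifford.

(* Write T_L(w) for the part of the circuit above level L in which the j-th measurement
   is replaced by its Pauli S_j when w_j = 1 and dropped otherwise. Gates and
   measurements of one level act on disjoint qubits, so they commute, and unwinding the
   recursion shows that the back-cumulant of F(u) at level L + 0.5 is T_L(u)^† T_L(0).
   Inserting S_j into the whole circuit at every measurement with u_j = 1 does not
   change it: resolving each measurement into its two projectors, S_j P_b = (-1)^b P_b,
   so a term with outcome string o picks up the sign (-1)^(u|o), and a term that does
   not vanish has o in the outcome code, which is orthogonal to u. If L >= l'_u nothing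
   is inserted above L; if L < l_u nothing is inserted up to L, and cancelling the
   common unitary part up to level L leaves the part above L. Either way
   T_L(u) = T_L(0), which is unitary, so the back-cumulant is the identity. *)

From mathcomp Require Import all_boot all_order all_algebra algC.
From mathcomp Require Import zify.
From Stdlib Require Import ClassicalEpsilon.
Set Implicit Arguments. Unset Strict Implicit. Unset Printing Implicit Defensive.
Import Order.TTheory GRing.Theory Num.Theory.
Local Open Scope ring_scope.

Lemma eq_foldr (T R : Type) (f g : T -> R -> R) z s :
  f =2 g -> foldr f z s = foldr g z s.
Proof. by move=> fg; elim: s => //= x s ->. Qed.

Lemma geq_bigminn_seq (I : eqType) (r : seq I) (P : pred I) (F : I -> nat) x0 i :
  i \in r -> P i -> (\big[minn/x0]_(j <- r | P j) F j <= F i)%N.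
Proof.
elim: r => //= j r IH; rewrite inE big_cons => /predU1P [-> ->|ri Pi]; first exact: geq_minl.
by case: (P j); [apply: leq_trans (geq_minr _ _) (IH ri Pi) | apply: IH].
Qed.

Lemma mx_neq0_image (R : nzRingType) m p (A : 'M[R]_(m, p)) :
  A != 0 -> exists psi : 'cV[R]_p, A *m psi != 0.
Proof.
move=> A_neq0; have [[i j] /= Aij | A0] := pickP (fun ij : 'I_m * 'I_p => A ij.1 ij.2 != 0).
  exists (delta_mx j 0); rewrite -colE; apply: contra Aij => /eqP/matrixP/(_ i 0).
  by rewrite !mxE => ->.
by case/eqP: A_neq0; apply/matrixP => i j; rewrite mxE; apply/eqP/negbFE/(A0 (i, j)).
Qed.

Section BinaryDigits.
Local Open Scope nat_scope.

Lemma bit0E x : bit 0 x = odd x.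
Proof. by rewrite /bit expn0 divn1. Qed.

Lemma bitSE r x : bit r.+1 x = bit r x./2.
Proof. by rewrite /bit expnS divnMA divn2. Qed.

Lemma bitr0 r : bit r 0 = false.
Proof. by rewrite /bit div0n. Qed.

Fixpoint nat_of_bits (f : nat -> bool) (m : nat) : nat :=
  if m is m'.+1 then f 0 + (nat_of_bits (fun r => f r.+1) m').*2 else 0.

Lemma nat_of_bits_lt f m : nat_of_bits f m < 2 ^ m.
Proof.
elim: m f => [//|m IH] f /=; have := IH (fun r => f r.+1).
rewrite expnS; case: (f 0) => /=; lia.
Qed.

Lemma bit_nat_of_bits f m r : bit r (nat_of_bits f m) = (r < m) && f r.
Proof.
elim: m f r => [|m IH] f [|r] /=; rewrite ?bitr0 //.
  by rewrite bit0E oddD odd_double addbF; case: (f 0).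
by rewrite bitSE half_bit_double IH.
Qed.

Lemma half_lt_exp2 m x : x < 2 ^ m.+1 -> x./2 < 2 ^ m.
Proof. by rewrite expnS -{1}(odd_double_half x); case: (odd x) => /=; lia. Qed.

Lemma bits_inj m x y : x < 2 ^ m -> y < 2 ^ m ->
  (forall r, r < m -> bit r x = bit r y) -> x = y.
Proof.
elim: m x y => [|m IH] x y; first by rewrite expn0 !ltnS !leqn0 => /eqP -> /eqP ->.
move=> /half_lt_exp2 hx /half_lt_exp2 hy hxy.
have eq_half : x./2 = y./2 by apply: IH => // r hr; rewrite -!bitSE hxy.
have eq_odd : odd x = odd y by rewrite -!bit0E hxy.
by rewrite -(odd_double_half x) -(odd_double_half y) eq_odd eq_half.
Qed.

Lemma exp2_leq_of_bit q x : bit q x -> 2 ^ q <= x.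
Proof. by rewrite /bit; case: (ltnP x (2 ^ q)) => // h; rewrite divn_small. Qed.

Lemma bit_addX q x : bit q (x + 2 ^ q) = ~~ bit q x.
Proof. by rewrite /bit addnC -{1}(mul1n (2 ^ q)) divnMDl ?expn_gt0. Qed.

Lemma bit_subX q x : 2 ^ q <= x -> bit q (x - 2 ^ q) = ~~ bit q x.
Proof. by move=> h; rewrite -{2}(subnK h) bit_addX negbK. Qed.

Lemma flipK q : involutive (flip q).
Proof.
move=> x; rewrite /flip; case hb: (bit q x).
  by rewrite bit_subX ?exp2_leq_of_bit // hb /= subnK ?exp2_leq_of_bit.
by rewrite bit_addX hb /= addnK.
Qed.

Lemma flip_lt m q x : q < m -> x < 2 ^ m -> flip q x < 2 ^ m.
Proof.
move=> hq hx; rewrite /flip; case hb: (bit q x); first exact: leq_ltn_trans (leq_subr _ _) hx.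
have hq0 : 0 < 2 ^ q by rewrite expn_gt0.
have exp2_split : 2 ^ m = 2 ^ (m - q) * 2 ^ q by rewrite -expnD subnK // ltnW.
rewrite exp2_split -ltn_divLR // addnC -{1}(mul1n (2 ^ q)) divnMDl // add1n.
have lt_quo : x %/ 2 ^ q < 2 ^ (m - q) by rewrite ltn_divLR // -exp2_split.
(* an even quotient below the even number 2 ^ (m - q) stays below it after adding one *)
rewrite ltn_neqAle lt_quo andbT; apply/eqP => quoS.
by have := congr1 odd quoS; rewrite /= -[odd (_ %/ _)]/(bit q x) hb oddX subn_eq0 leqNgt hq.
Qed.

End BinaryDigits.

Section Operators.
Variable n : nat.
Local Notation M := 'M[algC]_(2 ^ n).
Implicit Types A B U Sm : M.

Lemma adjM A B : adj (A *m B) = adj B *m adj A.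
Proof. by rewrite /adj map_mxM trmx_mul. Qed.

Lemma adj1 : adj (1%:M : M) = 1%:M.
Proof. by rewrite /adj map_mx1 trmx1. Qed.

Lemma adjZ a A : adj (a *: A) = a^* *: adj A.
Proof. by apply/matrixP => i j; rewrite /adj !mxE rmorphM. Qed.

Lemma unitary1 : unitary (1%:M : M).
Proof. by rewrite /unitary adj1 mulmx1. Qed.

Lemma unitaryM A B : unitary A -> unitary B -> unitary (A *m B).
Proof.
by rewrite /unitary adjM => hA hB; rewrite mulmxA -(mulmxA (adj B)) hA mulmx1 hB.
Qed.

Lemma unitary_mulmxV U : unitary U -> U *m adj U = 1%:M.
Proof. exact: mulmx1C. Qed.

Lemma unitary_invmx U : unitary U -> invmx U = adj U.
Proof.
move=> hU; have [_ Uunit] := mulmx1_unit hU.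
by rewrite -[RHS]mulmx1 -(mulmxV Uunit) mulmxA hU mul1mx.
Qed.

Lemma unitary_mulIr U A B : unitary U -> A *m U = B *m U -> A = B.
Proof. by move=> hU /(congr1 (mulmx^~ (adj U))); rewrite -!mulmxA unitary_mulmxV // !mulmx1. Qed.

Lemma involutive_unitary Sm : adj Sm = Sm -> Sm *m Sm = 1%:M -> unitary Sm.
Proof. by rewrite /unitary => ->. Qed.

Lemma adj_pX (q : 'I_n) : adj (pX q) = pX q.
Proof.
apply/matrixP => x y; rewrite /adj !mxE rmorph_nat.
suff -> : (val y == flip q x) = (val x == flip q y) by [].
by apply/idP/idP => /eqP e; apply/eqP; rewrite e flipK.
Qed.

Lemma pX_sq (q : 'I_n) : pX q *m pX q = 1%:M.
Proof.
apply/matrixP => x y; rewrite !mxE.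
pose fy : 'I_(2 ^ n) := Ordinal (flip_lt (ltn_ord q) (ltn_ord y)).
rewrite (bigD1 fy) //= big1 => [|z /negbTE fy_z]; rewrite !mxE.
  by rewrite eqxx mulr1 flipK addr0.
suff -> : (val z == flip q y) = false by rewrite mulr0.
by apply: contraFF fy_z => /eqP z_fy; apply/eqP/val_inj.
Qed.

Lemma adj_pZ (q : 'I_n) : adj (pZ q) = pZ q.
Proof.
apply/matrixP => x y; rewrite /adj !mxE rmorphM rmorph_nat rmorph_sign.
by case: (eqVneq x y) => [->|]; last rewrite !mul0r.
Qed.

Lemma pZ_sq (q : 'I_n) : pZ q *m pZ q = 1%:M.
Proof.
apply/matrixP => x y; rewrite !mxE (bigD1 x) //= big1 => [|z /negbTE x_z]; rewrite !mxE.
  by rewrite eqxx mul1r mulrCA -signr_addb addbb mulr1 addr0.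
by rewrite eq_sym x_z !mul0r.
Qed.

Lemma unitary_paulimat (a b : {ffun 'I_n -> bool}) : unitary (paulimat a b).
Proof.
have unitary_pX (q : 'I_n) : unitary (pX q) by rewrite /unitary adj_pX pX_sq.
have unitary_pZ (q : 'I_n) : unitary (pZ q) by rewrite /unitary adj_pZ pZ_sq.
rewrite /paulimat; elim: (enum 'I_n) => [|q s IH] /=; first exact: unitary1.
apply: unitaryM IH; apply: unitaryM; [case: (a q) | case: (b q)];
  by [apply: unitary_pX | apply: unitary_pZ | apply: unitary1].
Qed.

Lemma hermitian_pauli_sq Sm : hermitian_pauli Sm -> Sm *m Sm = 1%:M.
Proof.
case=> [[k [a [b ->]]] adjS]; rewrite -{2}adjS adjZ -scalemxAr -scalemxAl.
have conj_ik : ('i ^+ k)^* = (- 'i) ^+ k :> algC by rewrite -conjCi rmorphXn.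
rewrite (unitary_mulmxV (unitary_paulimat a b)) scalerA conj_ik -exprMn.
by rewrite mulNr mulCii opprK expr1n scale1r.
Qed.

Lemma add_proj (Sm : M) : proj false Sm + proj true Sm = 1%:M.
Proof.
rewrite /proj -scalerDr expr0 expr1 scale1r addrACA scaleN1r subrr addr0.
by rewrite -mulr2n -scaler_nat scalerA mulVf ?scale1r ?pnatr_eq0.
Qed.

Lemma mulmx_proj (Sm : M) b' b : Sm *m Sm = 1%:M ->
  (if b' then Sm else 1%:M) *m proj b Sm = (-1) ^+ (b' && b) *: proj b Sm.
Proof.
move=> Sm2; case: b'; last by rewrite mul1mx scale1r.
rewrite /proj -scalemxAr mulmxDr mulmx1 -scalemxAr Sm2 scalerA.
case: b; rewrite ?expr0 ?expr1 ?scale1r ?mulN1r ?mul1r addrC //.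
by rewrite !scaleN1r scaleNr -scalerN opprB addrC.
Qed.

End Operators.

Section DisjointSupport.
Variable n : nat.
Local Notation M := 'M[algC]_(2 ^ n).
Implicit Types (A B : M) (x y z : 'I_(2 ^ n)).

Lemma ord_bits_inj x y : (forall r : 'I_n, bit r x = bit r y) -> x = y.
Proof.
move=> xy; apply/val_inj/(bits_inj (ltn_ord x) (ltn_ord y)) => r rn.
exact: (xy (Ordinal rn)).
Qed.

Lemma ord_bits_neq x y : x != y -> exists r : 'I_n, bit r x != bit r y.
Proof.
move=> /eqP neq_xy.
case: (boolP [exists r : 'I_n, bit r x != bit r y]) => [/existsP //|/existsPn same].
by case: neq_xy; apply: ord_bits_inj => r; apply/eqP/negPn/same.
Qed.

Definition ord_of_bits (f : 'I_n -> bool) : 'I_(2 ^ n) :=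
  Ordinal (nat_of_bits_lt (fun r => if insub r is Some q then f q else false) n).

Lemma bit_ord_of_bits f (r : 'I_n) : bit r (ord_of_bits f) = f r.
Proof. by rewrite bit_nat_of_bits ltn_ord valK. Qed.

Definition splice (P : pred 'I_n) x z : 'I_(2 ^ n) :=
  ord_of_bits (fun r => if P r then bit r x else bit r z).

Lemma bit_splice P x z (r : 'I_n) : bit r (splice P x z) = if P r then bit r x else bit r z.
Proof. exact: bit_ord_of_bits. Qed.

Lemma trivial_on_splice_step A (q : 'I_n) x y x' y' :
  trivial_on q A -> bit q x = bit q y -> bit q x' = bit q y' ->
  A (splice (fun r => r < q)%N x' x) (splice (fun r => r < q)%N y' y) =
  A (splice (fun r => r < q.+1)%N x' x) (splice (fun r => r < q.+1)%N y' y).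
Proof.
move=> Aq xy xy'; apply: (Aq _ _).2; rewrite ?bit_splice ?ltnn ?ltnSn //.
  by move=> r rq; rewrite !bit_splice ltnS ltn_neqAle val_eqE rq.
by move=> r rq; rewrite !bit_splice ltnS ltn_neqAle val_eqE rq.
Qed.

Lemma trivial_on_entry_eq (P : pred 'I_n) A x y x' y' :
  (forall q, P q -> trivial_on q A) ->
  (forall q, P q -> bit q x = bit q y) -> (forall q, P q -> bit q x' = bit q y') ->
  (forall q, ~~ P q -> bit q x = bit q x' /\ bit q y = bit q y') ->
  A x y = A x' y'.
Proof.
move=> AP xy xy' off_P.
have mix0 x0 x1 : splice (fun r => r < 0)%N x1 x0 = x0.
  by apply: ord_bits_inj => r; rewrite bit_splice.
have mixn x0 x1 : splice (fun r => r < n)%N x1 x0 = x1.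
  by apply: ord_bits_inj => r; rewrite bit_splice ltn_ord.
suff mixing k : (k <= n)%N ->
    A x y = A (splice (fun r => r < k)%N x' x) (splice (fun r => r < k)%N y' y).
  by rewrite (mixing n) // !mixn.
elim: k => [_|k IH kn]; first by rewrite !mix0.
apply: etrans (IH (ltnW kn)) _.
have {kn} [q ->] : exists q : 'I_n, k = q by exists (Ordinal kn).
case: (boolP (P q)) => Pq.
  exact: trivial_on_splice_step (AP q Pq) (xy q Pq) (xy' q Pq).
have [xx' yy'] := off_P q Pq.
(* off [P] the qubit [q] of [x] and [x'] already agree, so both mixtures coincide *)
by congr (A _ _); apply: ord_bits_inj => r; rewrite !bit_splice ltnS;
  case: ltngtP => // /val_inj ->.
Qed.

Lemma mulmx_entry_single (A B : M) x z y0 :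
  (forall y, y != y0 -> A x y * B y z = 0) -> (A *m B) x z = A x y0 * B y0 z.
Proof. by move=> h; rewrite mxE (bigD1 y0) //= big1 ?addr0. Qed.

Lemma disjoint_support_commute A B :
  (forall q, trivial_on q A \/ trivial_on q B) -> A *m B = B *m A.
Proof.
(* with [P] the qubits on which [A] acts trivially, the only nonzero term of [(A B) x z]
   is at [splice P x z], that of [(B A) x z] at [splice P z x] *)
move=> AB; pose P q := if excluded_middle_informative (trivial_on q A) then true else false.
have AP q : P q -> trivial_on q A by rewrite /P; case: excluded_middle_informative.
have BP q : ~~ P q -> trivial_on q B.
  by rewrite /P; case: excluded_middle_informative => // nA _; case: (AB q).
apply/matrixP => x z.
rewrite (mulmx_entry_single (y0 := splice P x z)); last first.
  move=> y /ord_bits_neq [r]; rewrite bit_splice; case: (boolP (P r)) => Pr yr.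
    by rewrite ((AP r Pr) x y).1 ?mul0r // eq_sym.
  by rewrite ((BP r Pr) y z).1 ?mulr0.
rewrite (mulmx_entry_single (y0 := splice P z x)); last first.
  move=> y /ord_bits_neq [r]; rewrite bit_splice; case: (boolP (P r)) => Pr yr.
    by rewrite ((AP r Pr) y z).1 ?mulr0.
  by rewrite ((BP r Pr) x y).1 ?mul0r // eq_sym.
rewrite mulrC; congr (_ * _).
  apply: (trivial_on_entry_eq (P := predC P)) => // q; rewrite /= ?bit_splice.
  - by move=> /negbTE ->.
  - by move=> /negbTE ->.
  - by rewrite negbK => ->.
apply: (trivial_on_entry_eq (P := P)) => // q; rewrite ?bit_splice.
- by move=> ->.
- by move=> ->.
- by move=> /negbTE ->.
Qed.

End DisjointSupport.

Section CircuitEvaluation.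
Variable n : nat.
Local Notation M := 'M[algC]_(2 ^ n).
Local Notation circ := (circuit n).
Implicit Types (c : circ) (k L : nat).

Fixpoint eval_circ c k (gg : nat -> M -> M) (gm : nat -> nat -> M -> M) : M :=
  match c with
  | [::] => 1%:M
  | (l, Gate U) :: c' => eval_circ c' k gg gm *m gg l U
  | (l, Meas Sm) :: c' => eval_circ c' k.+1 gg gm *m gm k l Sm
  end.

Fixpoint meas_prod c k (gm : nat -> nat -> M -> M) : M :=
  match c with
  | [::] => 1%:M
  | (_, Gate _) :: c' => meas_prod c' k gm
  | (l, Meas Sm) :: c' => gm k l Sm *m meas_prod c' k.+1 gm
  end.

Fixpoint all_ops c k (P : nat -> nat -> M -> Prop) (Q : nat -> M -> Prop) : Prop :=
  match c with
  | [::] => True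
  | (l, Gate U) :: c' => Q l U /\ all_ops c' k P Q
  | (l, Meas Sm) :: c' => P k l Sm /\ all_ops c' k.+1 P Q
  end.

Lemma all_ops_mono c k P Q P' Q' :
  (forall j l Sm, P j l Sm -> P' j l Sm) -> (forall l U, Q l U -> Q' l U) ->
  all_ops c k P Q -> all_ops c k P' Q'.
Proof. by elim: c k => [//|[l [U|Sm]] c IH] k /= PP' QQ' [h1 h2]; split; auto. Qed.

Lemma all_opsT c k (P : nat -> nat -> M -> Prop) (Q : nat -> M -> Prop) :
  (forall j l Sm, P j l Sm) -> (forall l U, Q l U) -> all_ops c k P Q.
Proof. by elim: c k => [//|[l [U|Sm]] c IH] k /= hP hQ; split; auto. Qed.

Lemma all_ops_index c k : all_ops c k (fun j _ _ => k <= j)%N (fun _ _ => True).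
Proof.
elim: c k => [//|[l [U|Sm]] c IH] k /=; split => //.
by apply: all_ops_mono (IH _) => // j _ _ /ltnW.
Qed.

Lemma all_ops_nth c k (R : nat * op n -> Prop) :
  (forall i, (i < size c)%N -> R (nth (dflt n) c i)) ->
  all_ops c k (fun _ l Sm => R (l, Meas Sm)) (fun l U => R (l, Gate U)).
Proof.
elim: c k => [//|[l [U|Sm]] c IH] k /= h; split; try exact: (h 0%N).
all: by apply: IH => i; apply: (h i.+1).
Qed.

Lemma all_ops_levels c k (P : pred nat) :
  all P (map fst c) -> all_ops c k (fun _ l _ => P l) (fun l _ => P l).
Proof. by elim: c k => [//|[l [U|Sm]] c IH] k /= /andP [h1 h2]; split; auto. Qed.

Lemma all_ops_meas c k (P : nat -> nat -> M -> Prop) :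
  (forall i, (i < nmeas c)%N -> P (k + i)%N (mlev c i) (mop c i)) ->
  all_ops c k P (fun _ _ => True).
Proof.
elim: c k => [//|[l [U|Sm]] c IH] k /= h; split => //; first exact: IH.
  by have := h 0%N erefl; rewrite addn0.
by apply: IH => i hi; have := h i.+1 hi; rewrite addnS addSn.
Qed.

Lemma eq_eval_circ c k gg gm gg' gm' :
  all_ops c k (fun j l Sm => gm j l Sm = gm' j l Sm) (fun l U => gg l U = gg' l U) ->
  eval_circ c k gg gm = eval_circ c k gg' gm'.
Proof. by elim: c k => [//|[l [U|Sm]] c IH] k /= [-> /IH ->]. Qed.

Lemma eval_circ1 c k gg gm :
  all_ops c k (fun j l Sm => gm j l Sm = 1%:M) (fun l U => gg l U = 1%:M) ->
  eval_circ c k gg gm = 1%:M.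
Proof. by elim: c k => [//|[l [U|Sm]] c IH] k /= [-> /IH ->]; rewrite mulmx1. Qed.

Lemma meas_prod1 c k gm :
  all_ops c k (fun j l Sm => gm j l Sm = 1%:M) (fun _ _ => True) -> meas_prod c k gm = 1%:M.
Proof. by elim: c k => [//|[l [U|Sm]] c IH] k /= [h /IH ->]; rewrite ?h ?mul1mx. Qed.

Lemma unitary_eval_circ c k gg gm :
  all_ops c k (fun j l Sm => unitary (gm j l Sm)) (fun l U => unitary (gg l U)) ->
  unitary (eval_circ c k gg gm).
Proof.
elim: c k => [|[l [U|Sm]] c IH] k /=; first by move=> _; apply: unitary1.
all: by move=> [h1 /IH h2]; apply: unitaryM.
Qed.

Lemma adj_eval_meas c k gm gm' :
  all_ops c k (fun j l Sm => adj (gm j l Sm) = gm' j l Sm) (fun _ _ => True) ->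
  adj (eval_circ c k (fun _ _ => 1%:M) gm) = meas_prod c k gm'.
Proof.
elim: c k => [|[l [U|Sm]] c IH] k /=; first by rewrite adj1.
all: by move=> [h1 /IH h2]; rewrite adjM h2 ?h1 // adj1 mul1mx.
Qed.

Lemma krausE c f k :
  kraus c f k = eval_circ c k (fun _ U => U) (fun j _ Sm => proj (f j) Sm).
Proof. by elim: c k => [|[l [U|Sm]] c IH] k //=; rewrite IH. Qed.

Definition level_gates c k L :=
  eval_circ c k (fun l U => if l == L then U else 1%:M) (fun _ _ _ => 1%:M).

Lemma Ulev_acc c k L (acc : M) :
  foldl (fun acc p => if p.2 is Gate U then (if p.1 == L then U *m acc else acc) else acc)
        acc c = level_gates c k L *m acc.
Proof.
rewrite /level_gates; elim: c k acc => [|[l [U|Sm]] c IH] k acc /=; first by rewrite mul1mx.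
  by rewrite (IH k) -mulmxA; case: (l == L); rewrite ?mul1mx.
by rewrite (IH k.+1) mulmx1.
Qed.

Lemma UlevE c L : Ulev c L = level_gates c 0 L.
Proof. by rewrite /Ulev (Ulev_acc c 0) mulmx1. Qed.

Lemma meas_prod_iota c k (H : nat -> nat * M -> M) :
  foldr (fun i acc => H (k + i)%N (nth (0%N, 1%:M) (meas_list c) i) *m acc) 1%:M
        (iota 0 (nmeas c)) = meas_prod c k (fun j l Sm => H j (l, Sm)).
Proof.
elim: c k => [|[l [U|Sm]] c IH] k //=; rewrite addn0 -(IH k.+1); congr (_ *m _).
rewrite [iota 1 _](iotaDl 1 0) foldr_map.
by apply: eq_foldr => i acc; rewrite /= add0n addnA addn1.
Qed.

Lemma FcompE c (u : {ffun 'I_(nmeas c) -> bool}) L :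
  Fcomp u L = meas_prod c 0 (fun j l Sm => if bits_of u j && (l == L.+1) then Sm else 1%:M).
Proof.
rewrite -(meas_prod_iota c 0 (fun j p => if bits_of u j && (p.1 == L.+1) then p.2 else 1%:M)).
by rewrite /Fcomp -val_enum_ord foldr_map; apply: eq_foldr => j acc; rewrite /bits_of valK.
Qed.

Lemma eval_circ_sign c k gg gm (b : nat -> nat) :
  eval_circ c k gg (fun j l Sm => (-1) ^+ b j *: gm j l Sm) =
  (-1) ^+ (\sum_(k <= j < k + nmeas c) b j) *: eval_circ c k gg gm.
Proof.
elim: c k => [|[l [U|Sm]] c IH] k /=.
- by rewrite addn0 big_geq // scale1r.
- by rewrite IH scalemxAl.
rewrite IH -scalemxAl -scalemxAr scalerA -exprD addnC.
by rewrite /nmeas /= addnS -addSn [in RHS]big_ltn ?leq_addr.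
Qed.

Fixpoint bitseqs m : seq (seq bool) :=
  if m is m'.+1 then [seq false :: s | s <- bitseqs m'] ++ [seq true :: s | s <- bitseqs m']
  else [:: [::]].

Lemma size_bitseqs m s : s \in bitseqs m -> size s = m.
Proof.
elim: m s => [|m IH] s /=; first by rewrite inE => /eqP ->.
by rewrite mem_cat => /orP [] /mapP [s' /IH hs' ->] /=; rewrite hs'.
Qed.

Lemma eval_circ_sum c k gg (G : nat -> nat -> M -> bool -> M) :
  \sum_(s <- bitseqs (nmeas c)) eval_circ c k gg (fun j l Sm => G j l Sm (nth false s (j - k))) =
  eval_circ c k gg (fun j l Sm => G j l Sm false + G j l Sm true).
Proof.
elim: c k => [|[l [U|Sm]] c IH] k /=; first by rewrite big_seq1.
  by rewrite -mulmx_suml IH.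
have shift b s : eval_circ c k.+1 gg (fun j l Sm => G j l Sm (nth false (b :: s) (j - k))) =
                 eval_circ c k.+1 gg (fun j l Sm => G j l Sm (nth false s (j - k.+1))).
  apply/eq_eval_circ/(all_ops_mono _ _ (all_ops_index c k.+1)) => // j l' Sm' kj.
  by rewrite -(subnSK kj).
rewrite big_cat !big_map /= subnn mulmxDr.
under eq_bigr do rewrite shift.
under [X in _ + X]eq_bigr do rewrite shift.
by rewrite /= -!mulmx_suml !IH.
Qed.

End CircuitEvaluation.

Section LeveledCircuits.
Variable n : nat.
Local Notation M := 'M[algC]_(2 ^ n).
Local Notation circ := (circuit n).
Implicit Types (c : circ) (k L : nat) (w : nat -> bool).

Lemma sorted_levels_cons (x : nat * op n) c :
  sorted leq (map fst (x :: c)) -> all (leq x.1) (map fst c) /\ sorted leq (map fst c).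
Proof.
by move=> /= h; split; [apply: order_path_min h; apply: leq_trans | apply: path_sorted h].
Qed.

Lemma eval_circ_split c k L gg gm : sorted leq (map fst c) ->
  eval_circ c k gg gm =
  eval_circ c k (fun l U => if (L < l)%N then gg l U else 1%:M)
                (fun j l Sm => if (L < l)%N then gm j l Sm else 1%:M) *m
  eval_circ c k (fun l U => if (l <= L)%N then gg l U else 1%:M)
                (fun j l Sm => if (l <= L)%N then gm j l Sm else 1%:M).
Proof.
elim: c k => [|[l o] c IH] k; first by rewrite /= mulmx1.
case/sorted_levels_cons => /= /all_ops_levels c_above sorted_c.
case: (leqP l L) => lL.
  by case: o => [U|Sm] /=; rewrite (IH _ sorted_c) mulmx1 mulmxA.
have above k' : eval_circ c k' (fun l U => if (L < l)%N then gg l U else 1%:M)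
    (fun j l Sm => if (L < l)%N then gm j l Sm else 1%:M) = eval_circ c k' gg gm.
  by apply/eq_eval_circ/(all_ops_mono _ _ (c_above k')) => [j l' ? ll'|l' ? ll'];
    rewrite (leq_trans lL ll').
have below k' : eval_circ c k' (fun l U => if (l <= L)%N then gg l U else 1%:M)
    (fun j l Sm => if (l <= L)%N then gm j l Sm else 1%:M) = 1%:M.
  by apply/eval_circ1/(all_ops_mono _ _ (c_above k')) => [j l' ? ll'|l' ? ll'];
    rewrite leqNgt (leq_trans lL ll').
by case: o => [U|Sm] /=; rewrite above below !mulmx1.
Qed.

Definition tail_op c k L w :=
  eval_circ c k (fun l U => if (L < l)%N then U else 1%:M)
                (fun j l Sm => if w j && (L < l)%N then Sm else 1%:M).

Definition level_paulis c k L w :=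
  eval_circ c k (fun _ _ => 1%:M) (fun j l Sm => if w j && (l == L) then Sm else 1%:M).

Fixpoint level_commuting c : Prop :=
  match c with
  | [::] => True
  | x :: c' =>
    (forall i, (i < size c')%N -> (nth (dflt n) c' i).1 = x.1 ->
       op_mat x.2 *m op_mat (nth (dflt n) c' i).2 = op_mat (nth (dflt n) c' i).2 *m op_mat x.2)
    /\ level_commuting c'
  end.

Lemma level_paulis_commute c k L w (U : M) :
  all_ops c k (fun _ l Sm => l = L -> U *m Sm = Sm *m U) (fun _ _ => True) ->
  U *m level_paulis c k L w = level_paulis c k L w *m U.
Proof.
rewrite /level_paulis; elim: c k => [|[l [V|Sm]] c IH] k /=; first by rewrite mul1mx mulmx1.
  by move=> [_ /IH]; rewrite !mulmx1.
move=> [USm /IH UP]; rewrite mulmxA UP -!mulmxA; congr (_ *m _).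
by case: (w k) (l =P L) => [[/USm //|_]|_] /=; rewrite mul1mx mulmx1.
Qed.

Lemma level_ops_split c k L w : level_commuting c ->
  eval_circ c k (fun l U => if l == L then U else 1%:M)
                (fun j l Sm => if w j && (l == L) then Sm else 1%:M) =
  level_gates c k L *m level_paulis c k L w.
Proof.
rewrite /level_gates /level_paulis.
elim: c k => [|[l [U|Sm]] c IH] k /=; first by rewrite mulmx1.
all: move=> [comm_head /IH {}IH].
  rewrite IH !mulmx1 -!mulmxA; congr (_ *m _); case: eqP => [lL|_]; last by rewrite mulmx1 mul1mx.
  apply/esym/level_paulis_commute.
  have := all_ops_nth k (R := fun p => p.1 = l -> U *m op_mat p.2 = op_mat p.2 *m U) comm_head.
  by apply: all_ops_mono => // j l' Sm' h l'L; apply: h; rewrite l'L.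
by rewrite IH !mulmx1 mulmxA.
Qed.

Lemma tail_op_peel c k L w : sorted leq (map fst c) -> level_commuting c ->
  tail_op c k L w = tail_op c k L.+1 w *m level_gates c k L.+1 *m level_paulis c k L.+1 w.
Proof.
move=> sorted_c comm_c; rewrite -mulmxA -level_ops_split // /tail_op (eval_circ_split k L.+1) //.
congr (_ *m _); apply/eq_eval_circ/all_opsT => [j l Sm|l U].
all: by case: (ltngtP l L.+1); rewrite ?andbF.
Qed.

Lemma all_levels_le_depth c : all (fun l => l <= depth c)%N (map fst c).
Proof.
rewrite /depth; elim: c => //= [[l o] c IH]; rewrite big_cons leq_maxl /=.
by apply: sub_all IH => l' /leq_trans; apply; apply: leq_maxr.
Qed.

Lemma level_commuting_of_nth c :
  (forall i j, (i < j < size c)%N -> (nth (dflt n) c i).1 = (nth (dflt n) c j).1 ->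
     op_mat (nth (dflt n) c i).2 *m op_mat (nth (dflt n) c j).2 =
     op_mat (nth (dflt n) c j).2 *m op_mat (nth (dflt n) c i).2) -> level_commuting c.
Proof.
elim: c => [//|x c IH] comm_c /=; split; first by move=> i ic /esym; apply: (comm_c 0%N i.+1).
by apply: IH => i j ij; apply: (comm_c i.+1 j.+1).
Qed.

End LeveledCircuits.

Section BackCumulant.
Variables (n : nat) (c : circuit n).
Hypothesis c_wf : wf_circuit c.
Local Notation M := 'M[algC]_(2 ^ n).

Lemma wf_sorted : sorted leq (map fst c).
Proof. by case: c_wf. Qed.

Lemma wf_level_commuting : level_commuting c.
Proof.
case: c_wf => _ _ disj _; apply: level_commuting_of_nth => i j ij same_level.
exact/disjoint_support_commute/disj.
Qed.

Lemma wf_ops k :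
  all_ops c k (fun _ _ Sm => adj Sm = Sm /\ Sm *m Sm = 1%:M) (fun _ U => unitary U).
Proof.
case: c_wf => _ _ _ ops.
apply: (all_ops_nth k (R := fun p => if p.2 is Meas Sm then adj Sm = Sm /\ Sm *m Sm = 1%:M
                                     else unitary (op_mat p.2))) => i /ops.
by case: (nth _ _ _) => l [U [] | Sm hSm] //; split; [case: hSm | apply: hermitian_pauli_sq].
Qed.

Lemma wf_depth k : all_ops c k (fun _ l _ => l <= depth c)%N (fun l _ => l <= depth c)%N.
Proof.
exact: (all_ops_levels k (P := fun l => l <= depth c)%N) (all_levels_le_depth c).
Qed.

Lemma unitary_eval_select (fg : nat -> bool) (fm : nat -> nat -> bool) k :
  unitary (eval_circ c k (fun l U => if fg l then U else 1%:M)
                         (fun j l Sm => if fm j l then Sm else 1%:M)).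
Proof.
apply/unitary_eval_circ/(all_ops_mono _ _ (wf_ops k)) => [j l Sm [adjSm Sm2]|l U hU].
  by case: (fm j l); [apply: involutive_unitary | apply: unitary1].
by case: (fg l); [apply: hU | apply: unitary1].
Qed.

Variable u : {ffun 'I_(nmeas c) -> bool}.

Definition outcome_of (s : seq bool) : {ffun 'I_(nmeas c) -> bool} :=
  [ffun i : 'I_(nmeas c) => nth false s i].

(* [j - 0] is the index into [s] used by [eval_circ_sum] for measurements numbered
   from [0] *)

Lemma kraus_outcome_of s : size s = nmeas c ->
  kraus c (bits_of (outcome_of s)) 0 =
  eval_circ c 0 (fun _ U => U) (fun j _ Sm => proj (nth false s (j - 0)) Sm).
Proof.
move=> size_s; rewrite krausE; apply/eq_eval_circ/all_opsT => // j _ Sm.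
rewrite subn0 /bits_of; case: insubP => [i _ <-|]; first by rewrite ffunE.
by rewrite -leqNgt -size_s => /(nth_default false) ->.
Qed.

Hypothesis u_perp : in_perp (@outcome_code n c) u.

(* a Kraus operator that does not vanish belongs to an outcome of the code, which is
   orthogonal to [u] *)
Lemma outcome_sign_perp s : s \in bitseqs (nmeas c) ->
  (-1) ^+ (\sum_(0 <= j < 0 + nmeas c) (bits_of u j && nth false s (j - 0))) *:
    eval_circ c 0 (fun _ U => U) (fun j _ Sm => proj (nth false s (j - 0)) Sm) =
  eval_circ c 0 (fun _ U => U) (fun j _ Sm => proj (nth false s (j - 0)) Sm).
Proof.
move=> /size_bitseqs size_s; rewrite -kraus_outcome_of //.
have [->|/mx_neq0_image kraus_s] := eqVneq (kraus c (bits_of (outcome_of s)) 0) 0.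
  by rewrite scaler0.
have /u_perp : outcome_code (outcome_of s) by [].
rewrite /bdot => even_dot; rewrite add0n big_mkord -signr_odd.
have -> : (\sum_(i < nmeas c) (bits_of u i && nth false s (i - 0)))%N =
          (\sum_(i < nmeas c) (u i && outcome_of s i))%N.
  by apply: eq_bigr => i _; rewrite subn0 /bits_of valK ffunE.
by rewrite even_dot scale1r.
Qed.

Lemma expand_measurements (X : nat -> M -> M) :
  eval_circ c 0 (fun _ U => U) (fun j _ Sm => X j Sm) =
  \sum_(s <- bitseqs (nmeas c))
     eval_circ c 0 (fun _ U => U) (fun j _ Sm => X j Sm *m proj (nth false s (j - 0)) Sm).
Proof.
rewrite (eval_circ_sum _ _ _ (fun j _ Sm b => X j Sm *m proj b Sm)).
by apply/eq_eval_circ/all_opsT => // j _ Sm; rewrite -mulmxDr add_proj mulmx1.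
Qed.

Lemma insert_paulis_perp :
  eval_circ c 0 (fun _ U => U) (fun j _ Sm => if bits_of u j then Sm else 1%:M) =
  eval_circ c 0 (fun _ U => U) (fun _ _ _ => 1%:M).
Proof.
rewrite expand_measurements [RHS]expand_measurements.
apply: eq_big_seq => s /outcome_sign_perp sign_trivial.
transitivity (eval_circ c 0 (fun _ U => U) (fun j _ Sm => proj (nth false s (j - 0)) Sm)).
  rewrite -{}sign_trivial -eval_circ_sign.
  by apply/eq_eval_circ/(all_ops_mono _ _ (wf_ops 0)) => // j _ Sm [_ Sm2]; rewrite mulmx_proj.
by apply/eq_eval_circ/all_opsT => // j _ Sm; rewrite mul1mx.
Qed.

Lemma u_meas_levels : all_ops c 0
  (fun j l _ => bits_of u j -> lev_min u <= l <= lev_max u)%N (fun _ _ => True).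
Proof.
apply: all_ops_meas => i ic; rewrite add0n /bits_of insubT /= => ui.
by rewrite (geq_bigminn_seq _ _ (mem_index_enum _) ui) (leq_bigmax_cond _ ui).
Qed.

Lemma tail_op_perp l : (l < lev_min u \/ lev_max u <= l)%N ->
  tail_op c 0 l (bits_of u) = tail_op c 0 l (fun _ => false).
Proof.
case=> [lt_l_min | ge_l_max]; last first.
  apply/eq_eval_circ/(all_ops_mono _ _ u_meas_levels) => // j l' Sm.
  by case: (bits_of u j) => // /(_ isT) /andP [_ /leq_trans/(_ ge_l_max)]; rewrite ltnNge => ->.
pose before := eval_circ c 0 (fun l' U => if (l' <= l)%N then U else 1%:M) (fun _ _ _ => 1%:M).
have before_unitary : unitary before :=
  unitary_eval_select (fun l' => l' <= l)%N (fun _ _ => false) 0.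
have split_at_l (b : nat -> bool) :
    all_ops c 0 (fun j l' _ => b j -> l < l')%N (fun _ _ => True) ->
    eval_circ c 0 (fun _ U => U) (fun j _ Sm => if b j then Sm else 1%:M) =
    tail_op c 0 l b *m before.
  move=> b_above; rewrite (eval_circ_split 0 l _ _ wf_sorted); congr (_ *m _).
    by apply/eq_eval_circ/all_opsT => // j l' Sm; case: (b j); case: ltnP.
  apply/eq_eval_circ/(all_ops_mono _ _ b_above) => // j l' Sm.
  by case: (b j) => [/(_ isT) ll'|_]; [rewrite leqNgt ll' | case: ifP].
have := insert_paulis_perp; rewrite split_at_l; last first.
  apply: all_ops_mono u_meas_levels => // j l' Sm u_l' /u_l' /andP [+ _].
  exact: leq_trans lt_l_min.
by rewrite (split_at_l (fun _ => false)) //; [apply: unitary_mulIr | apply: all_opsT].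
Qed.

Lemma tail_op_depth w : tail_op c 0 (depth c) w = 1%:M.
Proof.
apply/eval_circ1/(all_ops_mono _ _ (wf_depth 0)) => [j l Sm|l U]; rewrite ltnNge => ->//.
by rewrite andbF.
Qed.

Lemma bc_auxE d : (d <= depth c)%N ->
  bc_aux u d = adj (tail_op c 0 (depth c - d) (bits_of u)) *m
               tail_op c 0 (depth c - d) (fun _ => false).
Proof.
elim: d => [_ | d IH lt_d_depth] /=.
  rewrite subn0 !tail_op_depth adj1 mulmx1 FcompE.
  apply/meas_prod1/(all_ops_mono _ _ (wf_depth 0)) => //.
  by move=> j l Sm l_depth; rewrite (ltn_eqF (l_depth : l < (depth c).+1)%N) andbF.
rewrite {}IH ?UlevE ?FcompE; last exact: ltnW.
have -> : (depth c - d = (depth c - d.+1).+1)%N by rewrite subnSK.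
set L := (depth c - d.+1)%N.
have gates_unitary : unitary (level_gates c 0 L.+1).
  exact: (unitary_eval_select (fun l => l == L.+1) (fun _ _ => false) 0).
rewrite !(tail_op_peel 0 L _ wf_sorted wf_level_commuting) (unitary_invmx gates_unitary).
rewrite [level_paulis _ _ _ (fun _ => false)]eval_circ1; last exact: all_opsT.
rewrite !adjM.
rewrite (adj_eval_meas (gm' := fun j l Sm => if bits_of u j && (l == L.+1) then Sm else 1%:M)).
  by rewrite mulmx1 !mulmxA.
apply: all_ops_mono (wf_ops 0) => // j l Sm [adjSm _].
by case: ifP; rewrite ?adj1.
Qed.

End BackCumulant.

Theorem mainTheorem20 (n : nat) (c : circuit n) (Hwf : wf_circuit c)
  (Hlin : linear_code (@outcome_code n c))
  (u : {ffun 'I_(nmeas c) -> bool}) (Hperp : in_perp (@outcome_code n c) u)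
  (Hnz : u != [ffun => false])
  (l : nat) (Hl : (l <= depth c)%N)
  (Hcase : (l < lev_min u)%N \/ (lev_max u <= l)%N) :
  is_identity_mod_phase (back_cumulant u l).
Proof.
exists 1; rewrite /back_cumulant (bc_auxE Hwf) ?leq_subr // subKn //.
rewrite (tail_op_perp Hwf Hperp Hcase).
exact: (unitary_eval_select Hwf (fun l' => l < l')%N (fun _ _ => false) 0).
Qed.
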